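(* Let $a,a^\dagger$ be the annihilation and creation operators of the harmonic oscillator, $[a,a^\dagger]=1$, with vacuum $|0\rangle$ ($a|0\rangle=0$, $\langle0|a^\dagger=0$). For positive integers $n$ let $A_n^\dagger$ act on the formal span of $\{(a^\dagger)^m|0\rangle\}_{m\ge0}$ by $A_n^\dagger(a^\dagger)^m|0\rangle=\frac{m!}{(mn)!}(a^\dagger)^{mn}|0\rangle$, and let $A_n$ act from the right on the formal span of $\{\langle0|a^m\}_{m\ge0}$ by $\langle0|a^mA_n=\langle0|a^{mn}$. Then, with the infinite products over primes understood as formal series, $$\Big(\prod_{p\text{ prime}}\frac{1}{1-A_p^\dagger}\Big)a^\dagger|0\rangle=\sum_{n\ge1}\frac{1}{n!}(a^\dagger)^n|0\rangle,\qquad \prod_{p\text{ prime}}(1-A_p^\dagger)\sum_{n\ge1}\frac{1}{n!}(a^\dagger)^n|0\rangle=a^\dagger|0\rangle,$$ $$\langle0|a\Big(\prod_{p\text{ prime}}\frac{1}{1-A_p}\Big)=\sum_{n\ge1}\langle0|a^n,\qquad \sum_{n\ge1}\langle0|a^n\prod_{p\text{ prime}}(1-A_p)=\langle0|a.$$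
   Context: Since the $A_p^\dagger$ commute, $\frac{1}{1-A_p^\dagger}:=\sum_{k\ge0}(A_p^\dagger)^k$ and infinite products over primes are expanded formally as sums of monomials in the $A_p^\dagger$; applied to the vectors above, each coefficient of $(a^\dagger)^N|0\rangle$ ($N\ge1$) receives only finitely many contributions, and the result is interpreted coefficientwise in the formal space $\mathbb C[[a^\dagger]]|0\rangle$. The same conventions apply to the $A_p$ acting on bras. *)

From mathcomp Require Import all_boot all_order all_algebra.
Set Implicit Arguments. Unset Strict Implicit. Unset Printing Implicit Defensive.
Import Order.TTheory GRing.Theory Num.Theory.
Local Open Scope ring_scope.

(* A formal ket  sum_m c m (a^dag)^m |0>  is its coefficient function
   c : nat -> R (element of R[[a^dag]]|0>); a formal bra
   sum_m c m <0| a^m  is likewise c : nat -> R. *)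

(* A_n^dag (a^dag)^m|0> = m!/(mn)! (a^dag)^(mn)|0>, extended coefficientwise:
   the coefficient of (a^dag)^k in A_n^dag v is the sum over m with m*n = k,
   i.e. the single term m = k/n when n | k (n >= 1). *)
Definition Adag (R : numFieldType) (n : nat) (v : nat -> R) : nat -> R :=
  fun k => if (n %| k)%N then
             v (k %/ n)%N * ((k %/ n)`!)%:R / ((((k %/ n) * n)`!)%:R)
           else 0.

(* <0| a^m A_n = <0| a^(mn), extended coefficientwise (right action). *)
Definition Abra (R : numFieldType) (n : nat) (w : nat -> R) : nat -> R :=
  fun k => if (n %| k)%N then w (k %/ n)%N else 0.

Definition mono_ket (R : numFieldType) (s : seq nat) (v : nat -> R) : nat -> R :=
  foldr (fun p u => Adag p u) v s.
Definition mono_bra (R : numFieldType) (s : seq nat) (w : nat -> R) : nat -> R :=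
  foldr (fun p u => Abra p u) w s.

(* Monomials of prod_p 1/(1-X_p) = sum over multisets of primes
   (represented as nondecreasing lists of primes), coefficient 1. *)
Definition prime_multiset (s : seq nat) : bool := sorted leq s && all prime s.
(* Monomials of prod_p (1-X_p) = sum over finite sets of primes
   (strictly increasing lists of primes), coefficient (-1)^|S|. *)
Definition prime_set (s : seq nat) : bool := sorted ltn s && all prime s.

Definition fin_sum (R : numFieldType) (I : eqType) (f : I -> R) (x : R) : Prop :=
  exists L : seq I, [/\ uniq L, (forall i, i \notin L -> f i = 0)
                      & x = \sum_(i <- L) f i].

Definition ket1 (R : numFieldType) : nat -> R := fun m => (m == 1%N)%:R.
Definition bra1 (R : numFieldType) : nat -> R := fun m => (m == 1%N)%:R.
Definition ket_exp (R : numFieldType) : nat -> R :=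
  fun n => if (1 <= n)%N then ((n`!)%:R)^-1 else 0.
Definition bra_geom (R : numFieldType) : nat -> R :=
  fun n => if (1 <= n)%N then 1 else 0.

(* Coefficient N of (prod_p 1/(1-A_p^dag)) v *)
Definition inv_prod_ket (R : numFieldType) (v : nat -> R) (N : nat) (s : seq nat) : R :=
  if prime_multiset s then mono_ket s v N else 0.
(* Coefficient N of (prod_p (1-A_p^dag)) v *)
Definition prod_ket (R : numFieldType) (v : nat -> R) (N : nat) (s : seq nat) : R :=
  if prime_set s then (-1) ^+ size s * mono_ket s v N else 0.
Definition inv_prod_bra (R : numFieldType) (w : nat -> R) (N : nat) (s : seq nat) : R :=
  if prime_multiset s then mono_bra s w N else 0.
Definition prod_bra (R : numFieldType) (w : nat -> R) (N : nat) (s : seq nat) : R :=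
  if prime_set s then (-1) ^+ size s * mono_bra s w N else 0.

From mathcomp Require Import all_boot all_order all_algebra.
Import Order.TTheory GRing.Theory Num.Theory.
Set Implicit Arguments. Unset Strict Implicit. Unset Printing Implicit Defensive.
Local Open Scope ring_scope.

(* A monomial A_{p_1}^dag ... A_{p_k}^dag acts on kets as A_n^dag with
   n = p_1 ... p_k (the factorials telescope), and similarly for the A_p on
   bras.  Hence the coefficient of (a^dag)^N in each product is a sum over
   multisets (resp. sets) S of primes of a term that only depends on whether
   N = prod S (resp. prod S | N).  For prod_p 1/(1 - A_p) exactly one multiset
   has product N, by unique factorisation; for prod_p (1 - A_p) the relevant
   sets are the subsets of the prime divisors of N, whose signed count
   sum_S (-1)^|S| is 1 if N = 1 and 0 otherwise. *)

Definition prodn (s : seq nat) : nat := (\prod_(p <- s) p)%N.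

Lemma prodn_cons p s : prodn (p :: s) = (p * prodn s)%N.
Proof. by rewrite /prodn big_cons. Qed.

Lemma all_prime_gt0 s : all prime s -> all (fun p => 0 < p)%N s.
Proof. by apply: sub_all => p; exact: prime_gt0. Qed.

Lemma prodn_prime_gt0 s : all prime s -> (0 < prodn s)%N.
Proof.
elim: s => [|p s IHs] /=; first by rewrite /prodn big_nil.
by case/andP=> p_pr s_pr; rewrite prodn_cons muln_gt0 prime_gt0 ?IHs.
Qed.

Lemma logn_prodn p s : prime p -> all prime s -> logn p (prodn s) = count_mem p s.
Proof.
move=> p_pr; elim: s => [|q s IHs] /=; first by rewrite /prodn big_nil logn1.
case/andP=> q_pr s_pr; have s_gt0 := prodn_prime_gt0 s_pr.
by rewrite prodn_cons (lognM _ (prime_gt0 q_pr) s_gt0) logn_prime // IHs // eq_sym.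
Qed.

Lemma prime_multiset_inj s t :
  prime_multiset s -> prime_multiset t -> prodn s = prodn t -> s = t.
Proof.
move=> /andP[s_sorted s_pr] /andP[t_sorted t_pr] st_prod.
apply: (sorted_eq leq_trans anti_leq) => //; apply/allP => x.
rewrite mem_cat => /orP x_st; have x_pr : prime x.
  by case: x_st => [/(allP s_pr)|/(allP t_pr)].
by rewrite /= -!logn_prodn // st_prod.
Qed.

Lemma exists_prime_factors N : (0 < N)%N -> exists2 s, all prime s & prodn s = N.
Proof.
elim/ltn_ind: N => N IHN N_gt0; have [N_le1|N_gt1] := leqP N 1.
  by exists [::] => //; rewrite /prodn big_nil; apply/eqP; rewrite eqn_leq N_gt0.
have pN_pr := pdiv_prime N_gt1.
have [s s_pr sE] : exists2 s, all prime s & prodn s = (N %/ pdiv N)%N.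
  apply: IHN; first exact: ltn_Pdiv (prime_gt1 _) N_gt0.
  by rewrite divn_gt0 ?prime_gt0 // dvdn_leq ?pdiv_dvd.
by exists (pdiv N :: s); rewrite /= ?pN_pr // prodn_cons sE mulnC divnK ?pdiv_dvd.
Qed.

Lemma exists_prime_multiset N : (0 < N)%N -> exists2 s, prime_multiset s & prodn s = N.
Proof.
case/exists_prime_factors => s s_pr <-; exists (sort leq s).
  by rewrite /prime_multiset sort_sorted ?all_sort //; exact: leq_total.
by rewrite /prodn (perm_big _ (permEl (perm_sort leq s))).
Qed.

Lemma prime_dvdn_prodn p s :
  prime p -> all prime s -> (p %| prodn s)%N = (p \in s).
Proof.
move=> p_pr s_pr; have s_gt0 := prodn_prime_gt0 s_pr.
by rewrite -has_pred1 has_count -logn_prodn // logn_gt0 mem_primes p_pr s_gt0.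
Qed.

Lemma prodn_dvdn s N :
  uniq s -> all prime s -> (forall p, p \in s -> p %| N)%N -> (prodn s %| N)%N.
Proof.
elim: s => [|p s IHs] /=; first by rewrite /prodn big_nil dvd1n.
case/andP=> p_notin_s s_uniq /andP[p_pr s_pr] s_dvdN.
rewrite prodn_cons Gauss_dvd ?prime_coprime ?prime_dvdn_prodn //.
rewrite s_dvdN ?mem_head // IHs // => q q_s.
by apply: s_dvdN; rewrite in_cons q_s orbT.
Qed.

Section Subseqs.
Variable T : eqType.
Implicit Types s t : seq T.

Fixpoint subseqs s : seq (seq T) :=
  if s is x :: s' then subseqs s' ++ map (cons x) (subseqs s') else [:: [::]].

Lemma mem_subseqs s t : (t \in subseqs s) = subseq t s.
Proof.
elim: s t => [|x s IHs] [|y t] //=; rewrite mem_cat ?IHs ?sub0seq //.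
have cons_inj : injective (cons x) by move=> ? ? [].
have [->|neq_yx] := eqVneq y x.
  by rewrite (mem_map cons_inj) IHs orb_idl // => /(subseq_trans (subseq_cons t x)).
by rewrite orb_idr // => /mapP[t' _ [eq_yx _]]; rewrite eq_yx eqxx in neq_yx.
Qed.

Lemma subseqs_uniq s : uniq s -> uniq (subseqs s).
Proof.
elim: s => [|x s IHs] //= /andP[x_notin_s s_uniq].
rewrite cat_uniq IHs // map_inj_uniq ?IHs //; last by move=> t t' [].
rewrite andbT; apply/hasPn => _ /mapP[t _ ->].
by rewrite mem_subseqs; apply: contra x_notin_s => /mem_subseq; apply; exact: mem_head.
Qed.

Lemma sorted_subset_subseq (leT : rel T) s t :
  irreflexive leT -> transitive leT -> sorted leT s -> sorted leT t ->
  {subset t <= s} -> subseq t s.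
Proof.
move=> irr tr s_sorted t_sorted t_sub_s.
suff -> : t = filter (mem t) s by exact: filter_subseq.
apply: (irr_sorted_eq tr irr) => //; first exact: sorted_filter.
by move=> x; rewrite mem_filter andb_idr //; exact: t_sub_s.
Qed.

End Subseqs.

Lemma sum_subseqs_sign (R : pzRingType) (T : eqType) (s : seq T) :
  \sum_(t <- subseqs s) (-1 : R) ^+ size t = (s == [::])%:R.
Proof.
elim: s => [|x s IHs] /=; first by rewrite big_seq1 expr0.
rewrite big_cat big_map /= IHs.
under eq_bigr do rewrite exprS.
by rewrite -mulr_sumr IHs mulN1r subrr.
Qed.

Lemma prime_set_subseqs_primes N t : t \in subseqs (primes N) -> prime_set t.
Proof.
rewrite mem_subseqs => t_sub.
rewrite /prime_set (subseq_sorted ltn_trans t_sub (sorted_primes N)).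
by apply/allP => p /(mem_subseq t_sub); rewrite mem_primes => /andP[].
Qed.

Lemma prodn_dvdn_subseqs N t :
  (0 < N)%N -> prime_set t -> (prodn t %| N)%N = (t \in subseqs (primes N)).
Proof.
move=> N_gt0 /andP[t_sorted t_pr]; rewrite mem_subseqs; apply/idP/idP => [t_dvdN|t_sub].
  apply: (sorted_subset_subseq ltnn ltn_trans (sorted_primes N) t_sorted) => p p_t.
  rewrite mem_primes (allP t_pr p p_t) N_gt0 /=.
  by apply: dvdn_trans t_dvdN; rewrite prime_dvdn_prodn // (allP t_pr p p_t).
apply: prodn_dvdn (sorted_uniq ltn_trans ltnn t_sorted) t_pr _ => p.
by move/(mem_subseq t_sub); rewrite mem_primes => /and3P[].
Qed.

Section Monomials.
Variable R : numFieldType.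

Lemma mono_ketE (s : seq nat) (v : nat -> R) N :
  all (fun p => 0 < p)%N s ->
  mono_ket s v N = if (prodn s %| N)%N
                   then v (N %/ prodn s)%N * ((N %/ prodn s)`!)%:R / (N`!)%:R else 0.
Proof.
elim: s N => [|p s IHs] N /=.
  by rewrite /prodn big_nil dvd1n divn1 mulfK // pnatr_eq0 -lt0n fact_gt0.
case/andP=> p_gt0 s_gt0; rewrite /Adag prodn_cons.
have [/dvdnP[m ->]|ndvd_pN] := boolP (p %| N)%N; last first.
  by case: ifP => // /(dvdn_trans (dvdn_mulr _ (dvdnn p))); rewrite (negbTE ndvd_pN).
rewrite mulnK // IHs // [(p * _)%N]mulnC dvdn_pmul2r // divnMr //.
case: ifP => _; last by rewrite !mul0r.
by rewrite divfK // pnatr_eq0 -lt0n fact_gt0.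
Qed.

Lemma mono_braE (s : seq nat) (w : nat -> R) N :
  all (fun p => 0 < p)%N s ->
  mono_bra s w N = if (prodn s %| N)%N then w (N %/ prodn s)%N else 0.
Proof.
elim: s N => [|p s IHs] N /=; first by rewrite /prodn big_nil dvd1n divn1.
case/andP=> p_gt0 s_gt0; rewrite /Abra prodn_cons.
have [/dvdnP[m ->]|ndvd_pN] := boolP (p %| N)%N; last first.
  by case: ifP => // /(dvdn_trans (dvdn_mulr _ (dvdnn p))); rewrite (negbTE ndvd_pN).
by rewrite mulnK // IHs // [(p * _)%N]mulnC dvdn_pmul2r // divnMr.
Qed.

End Monomials.

Section FormalSums.
Variable R : numFieldType.

Lemma fin_sum_prime_multisets (g : seq nat -> R) N c :
  (forall s, prime_multiset s -> g s = (N == prodn s)%:R * c) ->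
  fin_sum (fun s => if prime_multiset s then g s else 0) ((0 < N)%N%:R * c).
Proof.
move=> gE; have [N0|N_gt0] := posnP N; first subst N.
  exists [::]; split => // [s _|]; last by rewrite big_nil ?mul0r.
  case: ifP => // /[dup] /andP[_ s_pr] /gE->.
  by rewrite eq_sym gtn_eqF ?mul0r // prodn_prime_gt0.
have [s0 s0_pm s0E] := exists_prime_multiset N_gt0.
exists [:: s0]; split => // [s|]; last by rewrite big_seq1 s0_pm gE // s0E eqxx.
rewrite inE => neq_s_s0; case: ifP => // s_pm; rewrite gE // -s0E.
have [/(prime_multiset_inj s0_pm s_pm) eq_s0_s|_] := eqVneq.
  by rewrite eq_s0_s eqxx in neq_s_s0.
by rewrite mul0r.
Qed.

Lemma fin_sum_prime_sets (g : seq nat -> R) N c :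
  (forall s, prime_set s -> g s = ((prodn s %| N) && (0 < N))%N%:R * c) ->
  fin_sum (fun s => if prime_set s then (-1) ^+ size s * g s else 0) ((N == 1)%N%:R * c).
Proof.
move=> gE; have [N0|N_gt0] := posnP N; first subst N.
  exists [::]; split => // [s _|]; last by rewrite big_nil ?mul0r.
  by case: ifP => // /gE->; rewrite andbF mul0r mulr0.
exists (subseqs (primes N)); split; first exact/subseqs_uniq/primes_uniq.
  move=> s s_notin; case: ifP => // s_ps.
  by rewrite gE // prodn_dvdn_subseqs // (negbTE s_notin) mul0r mulr0.
rewrite big_seq (eq_bigr (fun t => (-1) ^+ size t * c)) -?big_seq; last first.
  move=> t t_in; have t_ps := prime_set_subseqs_primes t_in.
  by rewrite t_ps gE // prodn_dvdn_subseqs // t_in N_gt0 mul1r.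
rewrite -mulr_suml sum_subseqs_sign primes_eq0.
by rewrite ltnS leq_eqVlt ltnS leqn0 (gtn_eqF N_gt0) orbF.
Qed.

End FormalSums.

Section Coefficients.
Variables (R : numFieldType) (s : seq nat) (N : nat).
Hypothesis s_pr : all prime s.

Let s_gt0 : (0 < prodn s)%N := prodn_prime_gt0 s_pr.

Let eqn_prodnF : (prodn s %| N)%N = false -> (N == prodn s) = false.
Proof. by apply: contraFF => /eqP->. Qed.

Let eqn_mul_prodn m : (m * prodn s == prodn s)%N = (m == 1)%N.
Proof. by rewrite -{2}(mul1n (prodn s)) eqn_pmul2r. Qed.

Lemma mono_ket_ket1 : mono_ket s (@ket1 R) N = (N == prodn s)%:R / (N`!)%:R.
Proof.
rewrite mono_ketE ?all_prime_gt0 //; case: ifP => [/dvdnP[m ->]|/eqn_prodnF->].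
  rewrite /ket1 mulnK // eqn_mul_prodn.
  by case: eqP => [->|_]; rewrite ?mul0r // mulr1.
by rewrite mul0r.
Qed.

Lemma mono_ket_exp :
  mono_ket s (ket_exp R) N = ((prodn s %| N) && (0 < N))%N%:R / (N`!)%:R.
Proof.
rewrite mono_ketE ?all_prime_gt0 //; case: ifP => [/dvdnP[m ->]|_]; last by rewrite mul0r.
rewrite /ket_exp mulnK // muln_gt0 s_gt0 andbT.
by case: m => [|m]; rewrite ?mul0r // mulVf // pnatr_eq0 -lt0n fact_gt0.
Qed.

Lemma mono_bra_bra1 : mono_bra s (@bra1 R) N = (N == prodn s)%:R.
Proof.
rewrite mono_braE ?all_prime_gt0 //; case: ifP => [/dvdnP[m ->]|/eqn_prodnF->] //.
by rewrite /bra1 mulnK // eqn_mul_prodn.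
Qed.

Lemma mono_bra_geom : mono_bra s (@bra_geom R) N = ((prodn s %| N) && (0 < N))%N%:R.
Proof.
rewrite mono_braE ?all_prime_gt0 //; case: ifP => [/dvdnP[m ->]|_] //.
by rewrite /bra_geom mulnK // muln_gt0 s_gt0 andbT; case: m.
Qed.

End Coefficients.

Theorem mainTheorem5 (R : numFieldType) :
  [/\ (forall N : nat, fin_sum (inv_prod_ket (@ket1 R) N) (ket_exp R N)),
      (forall N : nat, fin_sum (prod_ket (@ket_exp R) N) (ket1 R N)),
      (forall N : nat, fin_sum (inv_prod_bra (@bra1 R) N) (bra_geom R N))
    & (forall N : nat, fin_sum (prod_bra (@bra_geom R) N) (bra1 R N))].
Proof.
split=> N.
- have -> : ket_exp R N = (0 < N)%N%:R * (N`!)%:R^-1.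
    by rewrite /ket_exp; case: (0 < N)%N; rewrite ?mul1r ?mul0r.
  apply: (fin_sum_prime_multisets (g := fun s => mono_ket s (@ket1 R) N)).
  by move=> s /andP[_ s_pr]; rewrite mono_ket_ket1.
- have -> : ket1 R N = (N == 1)%N%:R * (N`!)%:R^-1.
    by rewrite /ket1; case: eqP => [->|_]; rewrite ?mul0r // invr1 mulr1.
  apply: (fin_sum_prime_sets (g := fun s => mono_ket s (ket_exp R) N)).
  by move=> s /andP[_ s_pr]; rewrite mono_ket_exp.
- have -> : bra_geom R N = (0 < N)%N%:R * 1 by rewrite mulr1 /bra_geom; case: ifP.
  apply: (fin_sum_prime_multisets (g := fun s => mono_bra s (@bra1 R) N)).
  by move=> s /andP[_ s_pr]; rewrite mono_bra_bra1 ?mulr1.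
- rewrite -[bra1 R N]mulr1.
  apply: (fin_sum_prime_sets (g := fun s => mono_bra s (@bra_geom R) N)).
  by move=> s /andP[_ s_pr]; rewrite mono_bra_geom ?mulr1.
Qed.
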